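(* Let $q\ge 2$ be an integer, $M\in\mathbb{Z}$, $N\in\mathbb{N}$, and let $a_{M+1},\dots,a_{M+N}$ be complex numbers. Then \[ \frac{q}{\varphi(q)}\sum_{\xi\in G_1(q)}\Bigl|\sum_{n=M+1}^{M+N}a_n\,\xi(n)\Bigr|^2 = q\mathop{\sum_{n=M+1}^{M+N}\ \sum_{n'=M+1}^{M+N}}_{\substack{\gcd(nn',q)=1\\ n\equiv n' \ (\mathrm{mod}\ q)}}\overline{a_n}\,a_{n'}\;e\!\left(\frac{\overline{n}}{q}\cdot\frac{n'-n}{q}\right), \] where $\overline{n}$ denotes any integer with $n\overline{n}\equiv 1 \pmod q$ (note $(n'-n)/q$ is an integer in each term). Moreover $G_1(q)$ consists of exactly $\varphi(q)$ characters, namely $\xi_0\chi$ where $\xi_0$ is any fixed element of $G_1(q)$ and $\chi$ runs over the Dirichlet characters modulo $q$ (viewed as characters modulo $q^2$).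
   Context: $e(x)=\exp(2\pi i x)$ and $\varphi$ is Euler's function. For a positive integer $q$, $G_1(q)$ denotes the set of Dirichlet characters $\xi$ modulo $q^2$ such that $\xi(x)=e\!\left(\frac{x-1}{q^2}\right)$ for every integer $x\equiv 1\pmod q$. Dirichlet characters modulo $q^2$ vanish on integers not coprime to $q$. *)

From HB Require Import structures.
From mathcomp Require Import all_boot all_order all_algebra.
From mathcomp Require Import complex.
From mathcomp Require Import reals trigo.
Set Implicit Arguments. Unset Strict Implicit. Unset Printing Implicit Defensive.
Import Order.TTheory GRing.Theory Num.Theory.
Local Open Scope ring_scope.

Definition e (R : realType) (x : R) : R[i] :=
  Complex (cos (2 * pi * x)) (sin (2 * pi * x)).

Definition dirichlet_char (R : realType) (m : nat) (xi : int -> R[i]) : Prop :=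
  [/\ forall x : int, xi (x + m%:Z) = xi x,
      forall x y : int, xi (x * y) = xi x * xi y,
      xi 1 = 1 &
      forall x : int, (xi x == 0) = ~~ coprimez x m%:Z].

Definition G1 (R : realType) (q : nat) (xi : int -> R[i]) : Prop :=
  dirichlet_char (q ^ 2) xi /\
  forall x : int, (x = 1 %[mod q%:Z])%Z ->
    xi x = e ((x - 1)%:~R / (q ^ 2)%:R).

(* Write u = 1 + q.  It has order q modulo q^2 and every x = 1 (mod q) is
   congruent to a power u^t with x - 1 = t q (mod q^2), so a Dirichlet character
   mod q^2 sending u to e(1/q) lies in G_1(q); one exists because the sum over all
   characters mod q^2 of sum_(j < q) (chi(u)/e(1/q))^j is their number, the terms
   with 0 < j < q vanishing by orthogonality.  Dividing by a fixed xi_0 identifies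
   G_1(q) with the characters mod q, hence it has phi(q) elements.  Expanding the
   square, the left side becomes a sum of conj(xi(n)) xi(n') = xi(n^-1 n') over
   G_1(q), i.e. xi_0(n^-1 n') times an orthogonality sum mod q: it vanishes unless
   n = n' (mod q), and then n^-1 n' - 1 = nbar (n' - n) (mod q^2).  Orthogonality
   rests on characters separating the points of (Z/mZ)^x, which comes from the
   linear characters of this abelian group, moved from algC to R[i] along
   primitive roots of unity. *)

From HB Require Import structures.
From mathcomp Require Import all_boot all_order all_algebra.
From mathcomp Require Import all_fingroup all_solvable all_field all_character.
From mathcomp Require Import complex.
From mathcomp Require Import boolp reals trigo.
From mathcomp Require Import ring zify.
Set Implicit Arguments. Unset Strict Implicit. Unset Printing Implicit Defensive.
Import Order.TTheory GRing.Theory Num.Theory.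
Local Open Scope ring_scope.

Lemma coprimez_modz (x y d : int) :
  (x = y %[mod d])%Z -> coprimez x d = coprimez y d.
Proof. by move=> xy; rewrite /coprimez -gcdz_modl xy gcdz_modl. Qed.

Lemma coprime1z (m : int) : coprimez 1 m.
Proof. by rewrite coprimezE coprime1n. Qed.

Lemma eqz_mod_addM (x y d : int) : (x = y %[mod d])%Z <-> exists s, x = y + s * d.
Proof.
split=> [/eqP | [s ->]]; last by rewrite addrC modzMDl.
by rewrite eqz_mod_dvd => /dvdzP [s xy]; exists s; rewrite -xy; ring.
Qed.

Lemma coprimez_invmod (x m : int) : coprimez x m -> exists x', (x * x' = 1 %[mod m])%Z.
Proof.
move=> /eqP cxm; have [u [v]] := Bezoutz x m; rewrite cxm => uv.
by exists u; apply/eqz_mod_addM; exists (- v); rewrite -uv; ring.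
Qed.

Lemma eqz_mod_mul2l (a a' x y m : int) : (a * a' = 1 %[mod m])%Z ->
  (a * x = a * y %[mod m])%Z -> (x = y %[mod m])%Z.
Proof.
move=> aa' axy; have a'aK z : (z = a' * (a * z) %[mod m])%Z.
  by rewrite mulrA [a' * a]mulrC -modzMml aa' modzMml mul1r.
by rewrite a'aK [RHS]a'aK -modzMmr axy modzMmr.
Qed.

Lemma ord_modz_inj (m : nat) (x y : 'I_m) : (x%:Z = y %[mod m])%Z -> x = y.
Proof.
rewrite !modz_nat => -[xy]; apply/val_inj.
by rewrite /= -(modn_small (ltn_ord x)) xy modn_small.
Qed.

Lemma mulr_fixed_eq0 (F : idomainType) (c s : F) : c != 1 -> c * s = s -> s = 0.
Proof.
move=> c_neq1 /eqP; rewrite -subr_eq0 -{2}[s]mul1r -mulrBl mulf_eq0 subr_eq0.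
by rewrite (negbTE c_neq1) => /eqP.
Qed.

Lemma eqz_mod_inv_mul (n ns n' m : int) : (n * ns = 1 %[mod m])%Z ->
  (ns * n' == 1 %[mod m])%Z = (n == n' %[mod m])%Z.
Proof.
move=> nns; have nsn : (ns * n = 1 %[mod m])%Z by rewrite mulrC.
apply/eqP/eqP => [nsn'1 | nn']; last by rewrite -modzMmr -nn' modzMmr.
by apply: (eqz_mod_mul2l nsn); rewrite nsn nsn'1.
Qed.

Lemma sum_expr_unity_root (F : idomainType) n (u : F) : u ^+ n = 1 ->
  \sum_(j < n) u ^+ j = if u == 1 then n%:R else 0.
Proof.
have [-> _ | u_neq1 un1] := eqVneq u 1.
  by rewrite (eq_bigr (fun=> 1)) ?sumr_const ?card_ord // => j _; rewrite expr1n.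
have := subrX1 u n; rewrite un1 subrr => /esym /eqP; rewrite mulf_eq0 subr_eq0.
by rewrite (negbTE u_neq1) => /eqP.
Qed.

Lemma modz_ord (m : nat) (x : int) : (0 < m)%N ->
  (`|(x %% m)%Z| < m)%N /\ (x = `|(x %% m)%Z|%N %[mod m])%Z.
Proof.
move=> m_gt0; have m_neq0 : m%:Z != 0 by rewrite -lt0n.
have xm_ge0 : 0 <= (x %% m)%Z by rewrite modz_ge0.
split; last by rewrite gez0_abs // modz_mod.
by rewrite -ltz_nat gez0_abs // ltz_pmod.
Qed.

Section ExpTwoPiI.
Variable R : realType.

Lemma eD (x y : R) : e (x + y) = e x * e y.
Proof. by rewrite /e /= !mulrDr cosD sinD; congr Complex; ring. Qed.

Lemma e0 : e (0 : R) = 1.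
Proof. by rewrite /e mulr0 cos0 sin0. Qed.

Lemma e1 : e (1 : R) = 1.
Proof. by rewrite /e mulr1 [2 * _]mulr_natl cos2pi sin2pi. Qed.

Lemma e_mulrn (x : R) n : e (x *+ n) = e x ^+ n.
Proof. by elim: n => [|n IHn]; rewrite ?e0 // mulrS eD IHn exprS. Qed.

Lemma e_neq0 (x : R) : e x != 0.
Proof.
apply/eqP => ex0; have := eD x (- x); rewrite subrr e0 ex0 mul0r.
by apply/eqP; rewrite oner_eq0.
Qed.

Lemma e_int (z : int) : e (z%:~R : R) = 1.
Proof.
have e_nat n : e (n%:R : R) = 1 by rewrite e_mulrn e1 expr1n.
case: z => n; first exact: e_nat.
by have := eD (- (n.+1)%:R) (n.+1)%:R; rewrite addNr e0 e_nat mulr1 NegzE.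
Qed.

Lemma eDz (x : R) (z : int) : e (x + z%:~R) = e x.
Proof. by rewrite eD e_int mulr1. Qed.

Lemma e_modz (d : nat) (x y : int) : (0 < d)%N -> (x = y %[mod d])%Z ->
  e (x%:~R / d%:R : R) = e (y%:~R / d%:R).
Proof.
move=> d_gt0 /eqz_mod_addM [s ->]; have dR : d%:R != 0 :> R by rewrite pnatr_eq0 -lt0n.
by rewrite intrD intrM mulrDl mulfK // eDz.
Qed.

End ExpTwoPiI.

Section DirichletCharacter.
Variable R : realType.
Local Notation C := R[i].
Variable m : nat.

Definition principal_dchar (x : int) : C := if coprimez x m then 1 else 0.

Lemma dirichlet_char_principal : dirichlet_char m principal_dchar.
Proof.
rewrite /principal_dchar; split.
- by move=> x; rewrite (@coprimez_modz (x + m) x) // modzDr.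
- move=> x y; rewrite coprimezMl.
  by case: (coprimez x m); case: (coprimez y m); rewrite ?mulr1 ?mulr0.
- by rewrite coprime1z.
- by move=> x; case: (coprimez x m); rewrite ?oner_eq0 ?eqxx.
Qed.

Lemma sum_residues_principal : \sum_(x < m) principal_dchar x = (totient m)%:R.
Proof.
rewrite totient_count_coprime big_mkord natr_sum; apply: eq_bigr => x _.
by rewrite /principal_dchar coprimezE coprime_sym; case: coprime.
Qed.

Lemma dirichlet_char_mul (f g : int -> C) : dirichlet_char m f -> dirichlet_char m g ->
  dirichlet_char m (fun x => f x * g x).
Proof.
case=> f_per fM f1 f0 [g_per gM g1 g0]; split.
- by move=> x; rewrite f_per g_per.
- by move=> x y; rewrite fM gM mulrACA.
- by rewrite f1 g1 mulr1.
- by move=> x; rewrite mulf_eq0 f0 g0 orbb.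
Qed.

Variable xi : int -> C.
Hypothesis xi_dchar : dirichlet_char m xi.

Lemma dcharM x y : xi (x * y) = xi x * xi y.
Proof. by case: xi_dchar. Qed.

Lemma dchar1 : xi 1 = 1.
Proof. by case: xi_dchar. Qed.

Lemma dchar0 x : ~~ coprimez x m -> xi x = 0.
Proof. by case: xi_dchar => _ _ _ xi0 cx; apply/eqP; rewrite xi0. Qed.

Lemma dchar_neq0 x : coprimez x m -> xi x != 0.
Proof. by case: xi_dchar => _ _ _ ->; rewrite negbK. Qed.

Lemma dcharX x n : xi (x ^+ n) = xi x ^+ n.
Proof. by elim: n => [|n IHn]; rewrite ?dchar1 // !exprS dcharM IHn. Qed.

Lemma dchar_ext f : dirichlet_char m f -> (forall x, coprimez x m -> xi x = f x) -> xi = f.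
Proof.
move=> f_dchar xi_f; apply: funext => x; case cxm: (coprimez x m); first exact: xi_f.
by case: f_dchar => _ _ _ f0; apply/esym/eqP; rewrite dchar0 ?cxm // f0 cxm.
Qed.

Lemma dchar_addMz (x k : int) : xi (x + k * m) = xi x.
Proof.
have xi_addMn y n : xi (y + n%:Z * m) = xi y.
  elim: n => [|n IHn]; first by rewrite mul0r addr0.
  by case: xi_dchar => xi_per _ _ _; rewrite -addn1 PoszD mulrDl mul1r addrA xi_per.
case: k => [n|n]; first exact: xi_addMn.
by rewrite -(xi_addMn _ n.+1) NegzE; congr xi; ring.
Qed.

Lemma dchar_modz x y : (x = y %[mod m])%Z -> xi x = xi y.
Proof.
move=> xy; rewrite (divz_eq x m) (divz_eq y m) xy.
by rewrite !(addrC _ (y %% m)%Z) !dchar_addMz.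
Qed.

Hypothesis m_gt0 : (0 < m)%N.

Lemma dchar_totient x : coprimez x m -> xi x ^+ totient m = 1.
Proof.
move=> cxm; have [_ xr] := modz_ord x m_gt0; set r := `|_|%N in xr.
have crm : coprime r m by move: cxm; rewrite (coprimez_modz xr) coprimezE.
rewrite (dchar_modz xr) -dcharX -dchar1; apply: dchar_modz.
by rewrite -[Posz r]natz -natrX natz !modz_nat Euler_exp_totient.
Qed.

Lemma dchar_norm x : coprimez x m -> `|xi x| = 1.
Proof.
move=> cxm; apply/eqP; rewrite -(@pexpr_eq1 _ _ (totient m)) ?totient_gt0 //.
by rewrite -normrX dchar_totient // normr1.
Qed.

Lemma dchar_conj x : coprimez x m -> (xi x)^*%C = (xi x)^-1.
Proof. by move=> cxm; rewrite invc_norm dchar_norm // expr1n invr1 mul1r. Qed.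

Lemma dchar_conjM n ns n' : coprimez n m -> (n * ns = 1 %[mod m])%Z ->
  (xi n)^*%C * xi n' = xi (ns * n').
Proof.
move=> cnm nns; rewrite dchar_conj // dcharM; congr (_ * _).
apply: (mulfI (dchar_neq0 cnm)); rewrite mulfV ?dchar_neq0 //.
by rewrite -dcharM (dchar_modz nns) dchar1.
Qed.

Lemma sum_residues_dchar : xi <> principal_dchar -> \sum_(x < m) xi x = 0.
Proof.
move=> xi_nonprincipal.
have [a [cam xia]] : exists a, coprimez a m /\ xi a != 1.
  apply: contra_notP xi_nonprincipal => no_a.
  apply: dchar_ext dirichlet_char_principal _ => x cxm; rewrite /principal_dchar cxm.
  by apply/eqP/negPn/negP => xi_x; apply: no_a; exists x.
have [a' aa'] := coprimez_invmod cam.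
pose mul_a (x : 'I_m) := Ordinal (modz_ord (a * x) m_gt0).1.
have mul_aE (x : 'I_m) : (a * x = mul_a x %[mod m])%Z := (modz_ord _ m_gt0).2.
have mul_a_inj : injective mul_a.
  move=> x y /(congr1 (fun r : 'I_m => r%:Z)) axy; apply/ord_modz_inj/(eqz_mod_mul2l aa').
  by rewrite mul_aE axy -mul_aE.
apply: (mulr_fixed_eq0 xia); rewrite mulr_sumr [RHS](reindex_inj mul_a_inj) /=.
by apply: eq_bigr => x _; rewrite -dcharM (dchar_modz (mul_aE x)).
Qed.

End DirichletCharacter.

Lemma prim_root_exists (F : numClosedFieldType) n :
  (0 < n)%N -> exists z : F, n.-primitive_root z.
Proof.
move=> n_gt0; have [r Dp] := closed_field_poly_normal ('X^n - 1 : {poly F}).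
rewrite (monicP _) ?monicXnsubC // scale1r in Dp.
have rn1 : all n.-unity_root r by apply/allP => z; rewrite -root_prod_XsubC -Dp.
have sz_r : (n < (size r).+1)%N by rewrite -(size_prod_XsubC r id) -Dp size_XnsubC.
have [|z] := hasP (has_prim_root n_gt0 rn1 _ sz_r); last by exists z.
by rewrite -separable_prod_XsubC -Dp separable_Xn_sub_1 // pnatr_eq0 -lt0n.
Qed.

Lemma prim_root_transfer (F K : fieldType) n (z : F) (w : K) :
  n.-primitive_root z -> n.-primitive_root w ->
  exists phi : F -> K, forall j, phi (z ^+ j) = w ^+ j.
Proof.
move=> zP wP; have n_gt0 := prim_order_gt0 zP.
exists (fun c => if [pick j : 'I_n | c == z ^+ j] is Some j then w ^+ j else 0) => j.
case: pickP => [i /eqP zij | /(_ (Ordinal (ltn_pmod j n_gt0)))].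
  by apply/eqP; rewrite (eq_prim_root_expr wP) -(eq_prim_root_expr zP) zij.
by rewrite /= (eq_prim_root_expr zP) modn_mod eqxx.
Qed.

Lemma abelian_irr_separates (gT : finGroupType) (G : {group gT}) g :
  abelian G -> g != 1%g -> exists i : Iirr G, 'chi_i g != 1.
Proof.
move=> abG g_neq1.
have [i g_ker] : exists i : Iirr G, g \notin cfker 'chi_i.
  apply/existsP; apply: contraR g_neq1; rewrite negb_exists => /forallP g_ker.
  suff: g \in \bigcap_i cfker 'chi[G]_i by rewrite TI_cfker_irr inE.
  by apply/bigcapP => i _; rewrite -[_ \in _]negbK g_ker.
by exists i; move: g_ker; rewrite cfkerEirr inE lin_char1 ?(char_abelianP G abG).
Qed.

Section UnitsZp.
Variable m : nat.
Hypothesis m_gt1 : (1 < m)%N.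
Let m_gt0 : (0 < m)%N. Proof. exact: ltnW. Qed.

Lemma Zp_intr_mod (x : int) : (x%:~R : 'Z_m) = (`|(x %% m)%Z|%N)%:R.
Proof.
have xm_ge0 : 0 <= (x %% m)%Z by rewrite modz_ge0 // -lt0n.
rewrite {1}(divz_eq x m) intrD intrM.
have -> : (m%:Z%:~R : 'Z_m) = 0 by exact: pchar_Zp.
by rewrite mulr0 add0r -{1}(gez0_abs xm_ge0).
Qed.

Lemma Zp_intr_eq (x y : int) : ((x%:~R : 'Z_m) == y%:~R) = (x == y %[mod m])%Z.
Proof.
have [xm _] := modz_ord x m_gt0; have [ym _] := modz_ord y m_gt0.
have m_neq0 : m%:Z != 0 by rewrite -lt0n.
rewrite !Zp_intr_mod -!(inj_eq val_inj) /= !val_Zp_nat // !modn_small //.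
by rewrite -eqz_nat !gez0_abs // modz_ge0.
Qed.

Lemma Zp_intr_unit (x : int) : ((x%:~R : 'Z_m) \is a GRing.unit) = coprimez x m.
Proof.
have [_ xr] := modz_ord x m_gt0.
by rewrite Zp_intr_mod unitZpE // coprime_sym (coprimez_modz xr) coprimezE.
Qed.

Local Notation U := {unit 'Z_m}.

Definition unitZp (x : int) : U := insubd (1%g : U) (x%:~R : 'Z_m).

Lemma val_unitZp x : coprimez x m -> val (unitZp x) = x%:~R.
Proof. by move=> cxm; rewrite val_insubd Zp_intr_unit cxm. Qed.

Lemma unitZpM x y : coprimez x m -> coprimez y m ->
  unitZp (x * y) = (unitZp x * unitZp y)%g.
Proof.
move=> cxm cym; apply: val_inj.
by rewrite FinRing.val_unitM !val_unitZp ?coprimezMl ?cxm ?cym // intrM.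
Qed.

Lemma unitZp_modz x y : (x = y %[mod m])%Z -> unitZp x = unitZp y.
Proof. by move=> xy; rewrite /unitZp; congr insubd; apply/eqP; rewrite Zp_intr_eq xy. Qed.

Lemma unitZp_eq1 x : coprimez x m -> (unitZp x == 1%g) = (x == 1 %[mod m])%Z.
Proof.
by move=> cxm; rewrite -(inj_eq val_inj) val_unitZp // FinRing.val_unit1 -Zp_intr_eq.
Qed.

Lemma unitZp1 : unitZp 1 = 1%g.
Proof. by apply/eqP; rewrite unitZp_eq1 ?coprime1z. Qed.

Variable R : realType.
Local Notation C := R[i].

Lemma dchar_of_unit_hom (f : U -> C) :
  (forall u v, f (u * v)%g = f u * f v) -> f 1%g = 1 -> (forall u, f u != 0) ->
  dirichlet_char m (fun x => if coprimez x m then f (unitZp x) else 0).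
Proof.
move=> fM f1 f_neq0; split.
- by move=> x; rewrite (coprimez_modz (modzDr x m)) (unitZp_modz (modzDr x m)).
- move=> x y; rewrite coprimezMl.
  case cxm: (coprimez x m); case cym: (coprimez y m); rewrite ?mulr0 ?mul0r //=.
  by rewrite unitZpM.
- by rewrite coprime1z unitZp1.
- by move=> x; case: (coprimez x m); rewrite ?eqxx ?(negbTE (f_neq0 _)).
Qed.

Lemma dchar_separates y : coprimez y m -> ~~ (y == 1 %[mod m])%Z ->
  exists chi : int -> C, dirichlet_char m chi /\ chi y != 1.
Proof.
move=> cym y_neq1; pose G := [set: U]%G.
have abG : abelian G by apply/centsP => u _ v _; apply/val_inj; rewrite /= mulrC.
have [|i chi_y] := @abelian_irr_separates _ G (unitZp y) abG; first by rewrite unitZp_eq1.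
have lin_i : 'chi_i \is a linear_char := char_abelianP G abG i.
have n_gt0 : (0 < #|G|)%N := cardG_gt0 G.
have [z zP] := prim_root_exists algC n_gt0.
have [w wP] := prim_root_exists C n_gt0.
have [phi phiE] := prim_root_transfer zP wP.
have chi_pow u : exists j, 'chi_i u = z ^+ j.
  suff /(prim_rootP zP) [j ->] : 'chi_i u ^+ #|G| = 1 by exists j.
  by rewrite -lin_charX ?in_setT // expg_cardG ?in_setT // lin_char1.
exists (fun x => if coprimez x m then phi ('chi_i (unitZp x)) else 0).
split; last first.
  rewrite cym; have [j chiE] := chi_pow (unitZp y); rewrite chiE phiE.
  apply: contra chi_y => /eqP wj1; rewrite chiE -(expr0 z) (eq_prim_root_expr zP).
  by rewrite -(eq_prim_root_expr wP) wj1 expr0.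
apply: (@dchar_of_unit_hom (fun u => phi ('chi_i u))) => [u v | | u] /=.
- rewrite lin_charM ?in_setT //.
  by have [a ->] := chi_pow u; have [b ->] := chi_pow v; rewrite -exprD !phiE exprD.
- by rewrite lin_char1 // -(expr0 z) phiE expr0.
- have [a ->] := chi_pow u; rewrite phiE expf_eq0 negb_and orbC.
  by rewrite (prim_root_eq0 wP) -lt0n n_gt0.
Qed.

End UnitsZp.

Definition enumerates (A : Type) (P : A -> Prop) (k : nat) (en : 'I_k -> A) :=
  injective en /\ forall f, P f <-> exists i, f = en i.

Lemma enumerable_of_code (A : Type) (T : finType) (P : A -> Prop) (code : A -> T) :
  (forall f g, P f -> P g -> code f = code g -> f = g) ->
  exists k (en : 'I_k -> A), enumerates P en.
Proof.
move=> code_inj; pose S := [set t : T | `[< exists f, P f /\ code f = t >]].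
have codeS (i : 'I_#|S|) : exists f, P f /\ code f = enum_val i.
  by have := enum_valP i; rewrite inE => /asboolP.
pose en i := sval (cid (codeS i)).
have enP i : P (en i) /\ code (en i) = enum_val i by rewrite /en; case: cid.
exists #|S|, en; split=> [i j eij | f].
  by apply: enum_val_inj; rewrite -(enP i).2 -(enP j).2 eij.
split=> [Pf | [i ->]]; last exact: (enP i).1.
have fS : code f \in S by rewrite inE; apply/asboolP; exists f.
exists (enum_rank_in fS (code f)); apply: code_inj (enP _).1 _ => //.
by rewrite (enP _).2 enum_rankK_in.
Qed.

Lemma dchar_enumerable (R : realType) (m : nat) : (0 < m)%N ->
  exists k (en : 'I_k -> int -> R[i]), enumerates (dirichlet_char m) en.
Proof.
move=> m_gt0; have n_gt0 : (0 < totient m)%N by rewrite totient_gt0.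
have [w wP] := prim_root_exists R[i] n_gt0.
(* A character is determined by its values at 0, ..., m - 1, which are 0 or
   totient m-th roots of unity. *)
pose code (f : int -> R[i]) := [ffun x : 'I_m => [pick j : 'I_(totient m) | f x == w ^+ j]].
apply: (@enumerable_of_code _ _ _ code).
move=> f g f_dchar g_dchar /ffunP fg; apply: (dchar_ext f_dchar g_dchar) => x cxm.
have [xm xr] := modz_ord x m_gt0.
rewrite (dchar_modz f_dchar xr) (dchar_modz g_dchar xr); set r := Ordinal xm.
have /(prim_rootP wP) [j fj] := dchar_totient f_dchar m_gt0 cxm.
move: (fg r); rewrite !ffunE; case: pickP => [i /eqP fi | /(_ j)]; last first.
  by rewrite -(dchar_modz f_dchar xr) fj eqxx.
by case: pickP => [i' /eqP gi' [ii'] | //]; rewrite fi gi' ii'.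
Qed.

Section Orthogonality.
Variable R : realType.
Local Notation C := R[i].
Variable m : nat.
Hypothesis m_gt1 : (1 < m)%N.
Let m_gt0 : (0 < m)%N. Proof. exact: ltnW. Qed.
Variable k : nat.
Variable en : 'I_k -> int -> C.
Hypothesis en_enum : enumerates (dirichlet_char m) en.

Let en_dchar i : dirichlet_char m (en i).
Proof. by apply/en_enum.2; exists i. Qed.

Lemma sum_dchar_neq1 y : coprimez y m -> ~~ (y == 1 %[mod m])%Z -> \sum_i en i y = 0.
Proof.
move=> cym y_neq1; have [chi [chi_dchar chi_y]] := @dchar_separates m m_gt1 R y cym y_neq1.
have mul_chi i : exists j, (fun x => chi x * en i x) = en j.
  exact/en_enum.2/dirichlet_char_mul.
pose s i := sval (cid (mul_chi i)).
have sE i : (fun x => chi x * en i x) = en (s i) by rewrite /s; case: cid.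
have s_inj : injective s.
  move=> i j sij; apply: en_enum.1; apply: dchar_ext (en_dchar j) _ => // x cxm.
  apply: (mulfI (dchar_neq0 chi_dchar cxm)).
  by have := congr1 (fun f => f x) (sE i); rewrite sij -(sE j).
apply: (mulr_fixed_eq0 chi_y); rewrite mulr_sumr [RHS](reindex_inj s_inj) /=.
by apply: eq_bigr => i _; rewrite -(sE i).
Qed.

Lemma sum_dchar_eq1 y : (y = 1 %[mod m])%Z -> \sum_i en i y = k%:R.
Proof.
move=> y1; rewrite (eq_bigr (fun=> 1)) ?sumr_const ?card_ord // => i _.
by rewrite (dchar_modz (en_dchar i) y1) (dchar1 (en_dchar i)).
Qed.

Lemma card_dchar : k = totient m.
Proof.
apply/eqP; rewrite -(eqr_nat C); apply/eqP.
transitivity (\sum_(x < m) \sum_i en i x).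
  rewrite (bigD1 (Ordinal m_gt1)) //= sum_dchar_eq1 // big1 ?addr0 // => x x_neq1.
  have [cxm | ncxm] := boolP (coprimez x m); last first.
    by apply: big1 => i _; rewrite (dchar0 (en_dchar i)).
  apply: sum_dchar_neq1 => //; apply: contra x_neq1 => /eqP x1.
  by apply/eqP/ord_modz_inj/x1.
rewrite exchange_big /=.
have [i0 i0E] := (en_enum.2 _).1 (dirichlet_char_principal R m).
rewrite (bigD1 i0) //= -i0E sum_residues_principal big1 ?addr0 // => i i_neq0.
apply: sum_residues_dchar (en_dchar i) m_gt0 _ => enE.
by move/eqP: i_neq0; apply; apply: en_enum.1; rewrite enE.
Qed.

End Orthogonality.

Section G1Theory.
Variable R : realType.
Local Notation C := R[i].
Variable q : nat.
Hypothesis q_gt1 : (1 < q)%N.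
Let q_gt0 : (0 < q)%N. Proof. exact: ltnW. Qed.
Local Notation Q := (q ^ 2)%N.
Let QE : Q%:Z = q%:Z * q%:Z. Proof. by rewrite -PoszM mulnn. Qed.
Let Q_gt1 : (1 < Q)%N. Proof. by rewrite -mulnn (ltn_trans q_gt1) // ltn_Pmulr. Qed.
Let Q_gt0 : (0 < Q)%N. Proof. exact: ltnW. Qed.

Lemma coprimez_sqr x : coprimez x Q = coprimez x q.
Proof. by rewrite QE coprimezMr andbb. Qed.

Lemma modz_sqr x y : (x = y %[mod Q])%Z -> (x = y %[mod q])%Z.
Proof.
by move/eqz_mod_addM=> [s ->]; apply/eqz_mod_addM; exists (s * q); rewrite QE mulrA.
Qed.

Lemma G1_mul (xi0 chi : int -> C) : G1 q xi0 -> dirichlet_char q chi ->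
  G1 q (fun x => xi0 x * chi x).
Proof.
move=> [xi0_dchar xi0E] chi_dchar; split.
  case: xi0_dchar => xi0_per xi0M xi01 xi0_eq0.
  case: (chi_dchar) => _ chiM chi1 chi_eq0; split.
  - by move=> x; rewrite xi0_per (dchar_modz chi_dchar (modz_sqr (modzDr x Q))).
  - by move=> x y; rewrite xi0M chiM mulrACA.
  - by rewrite xi01 chi1 mulr1.
  - by move=> x; rewrite mulf_eq0 xi0_eq0 chi_eq0 coprimez_sqr orbb.
by move=> x x1; rewrite (dchar_modz chi_dchar x1) (dchar1 chi_dchar) mulr1 xi0E.
Qed.

Lemma G1_div (xi0 xi : int -> C) : G1 q xi0 -> G1 q xi ->
  dirichlet_char q (fun x => xi x / xi0 x).
Proof.
move=> [xi0_dchar xi0E] [xi_dchar xiE].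
have [_ xi0M xi01 xi0_eq0] := xi0_dchar; have [_ xiM xi1 xi_eq0] := xi_dchar.
split; last 3 first.
- by move=> x y; rewrite xi0M xiM invfM mulrACA.
- by rewrite xi01 xi1 invr1 mulr1.
- by move=> x; rewrite mulf_eq0 invr_eq0 xi_eq0 xi0_eq0 coprimez_sqr orbb.
move=> x; have [cxq | ncxq] := boolP (coprimez x q); last first.
  have ncxq' : ~~ coprimez (x + q) q by rewrite (coprimez_modz (modzDr x q)).
  by rewrite !(dchar0 xi_dchar) ?coprimez_sqr // !mul0r.
have [x' xx'] := coprimez_invmod (cxq : coprimez x q).
pose u := 1 + x' * q.
have u1 : (u = 1 %[mod q])%Z by rewrite /u addrC modzMDl.
have xqE : (x + q = x * u %[mod Q])%Z.
  have [s xx'E] := (eqz_mod_addM _ _ _).1 (xx' : (x * x' = 1 %[mod q])%Z).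
  by apply/eqz_mod_addM; exists (- s); rewrite /u mulrDr mulr1 mulrA xx'E QE; ring.
have xi_u : xi u = xi0 u by rewrite xiE // xi0E.
rewrite (dchar_modz xi_dchar xqE) (dchar_modz xi0_dchar xqE) xiM xi0M xi_u invfM.
by rewrite mulrACA divff ?mulr1 // xi0E // e_neq0.
Qed.

Lemma G1_divK (xi0 xi : int -> C) : G1 q xi0 -> G1 q xi ->
  xi = (fun x => xi0 x * (xi x / xi0 x)).
Proof.
move=> [xi0_dchar _] [xi_dchar _]; apply: funext => x.
have [cxq | ncxq] := boolP (coprimez x q).
  by rewrite mulrC divfK // (dchar_neq0 xi0_dchar) ?coprimez_sqr.
by rewrite (dchar0 xi_dchar) ?coprimez_sqr // mul0r mulr0.
Qed.

Lemma G1_mulK (xi0 chi : int -> C) : G1 q xi0 -> dirichlet_char q chi ->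
  (fun x => xi0 x * chi x / xi0 x) = chi.
Proof.
move=> [xi0_dchar _] chi_dchar; apply: funext => x.
have [cxq | ncxq] := boolP (coprimez x q).
  by rewrite mulrAC divff ?mul1r // (dchar_neq0 xi0_dchar) ?coprimez_sqr.
by rewrite (dchar0 chi_dchar) // mulr0 mul0r.
Qed.

Lemma G1_cosetE (xi0 xi : int -> C) : G1 q xi0 ->
  G1 q xi <-> exists chi, dirichlet_char q chi /\ xi = (fun x => xi0 x * chi x).
Proof.
move=> xi0_G1; split=> [xi_G1 | [chi [chi_dchar ->]]]; last exact: G1_mul.
by exists (fun x => xi x / xi0 x); split; [exact: G1_div | exact: G1_divK].
Qed.

Lemma enumerates_G1 (xi0 : int -> C) k (en : 'I_k -> int -> C) : G1 q xi0 ->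
  enumerates (dirichlet_char q) en -> enumerates (G1 q) (fun i x => xi0 x * en i x).
Proof.
move=> xi0_G1 [en_inj en_all].
have en_dchar i : dirichlet_char q (en i) by apply/en_all; exists i.
split=> [i j eij | xi].
  apply: en_inj; rewrite -(G1_mulK xi0_G1 (en_dchar i)) -(G1_mulK xi0_G1 (en_dchar j)).
  by apply: funext => x; have /= -> := congr1 (fun f => f x) eij.
rewrite (G1_cosetE _ xi0_G1); split=> [[chi [/en_all [i ->] ->]] | [i ->]]; first by exists i.
by exists (en i).
Qed.

Lemma enumerates_dchar (xi0 : int -> C) k (en : 'I_k -> int -> C) : G1 q xi0 ->
  enumerates (G1 q) en -> enumerates (dirichlet_char q) (fun i x => en i x / xi0 x).
Proof.
move=> xi0_G1 [en_inj en_all]; have en_G1 i : G1 q (en i) by apply/en_all; exists i.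
split=> [i j eij | chi].
  apply: en_inj; rewrite (G1_divK xi0_G1 (en_G1 i)) (G1_divK xi0_G1 (en_G1 j)).
  by apply: funext => x; have /= -> := congr1 (fun f => f x) eij.
split=> [chi_dchar | [i ->]]; last exact: G1_div.
have [i xi0chi] := (en_all _).1 (G1_mul xi0_G1 chi_dchar).
by exists i; rewrite -xi0chi; apply/esym/G1_mulK.
Qed.

Lemma gen_pow (n : nat) : ((1 + q%:Z) ^+ n = 1 + n%:Z * q %[mod Q])%Z.
Proof.
elim: n => [|n IHn]; first by rewrite expr0 mul0r addr0.
rewrite exprS -modzMmr IHn modzMmr.
by apply/eqz_mod_addM; exists n%:Z; rewrite QE -addn1 PoszD; ring.
Qed.

Lemma gen_pow_neq1 j : (0 < j < q)%N -> ~~ ((1 + q%:Z) ^+ j == 1 %[mod Q])%Z.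
Proof.
move=> /andP [j_gt0 jq]; rewrite gen_pow.
have -> : 1 + j%:Z * q = (1 + j * q)%N by rewrite PoszD PoszM.
have jqQ : (1 + j * q < Q)%N by rewrite -mulnn; nia.
by rewrite !modz_nat eqz_nat !modn_small //; apply/eqP; lia.
Qed.

Lemma sum_dchar_gen_geom k (en : 'I_k -> int -> C) : enumerates (dirichlet_char Q) en ->
  \sum_i \sum_(j < q) (en i (1 + q%:Z) / e (q%:R^-1)) ^+ j = k%:R.
Proof.
move=> en_enum; have en_dchar i : dirichlet_char Q (en i) by apply/en_enum.2; exists i.
rewrite exchange_big (bigD1 (Ordinal q_gt0)) //= [X in _ + X]big1 ?addr0 => [|j j_neq0].
  by rewrite (eq_bigr (fun=> 1)) ?sumr_const ?card_ord // => i _; rewrite expr0.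
have cgQ : coprimez (1 + q%:Z) Q.
  by rewrite coprimez_sqr (coprimez_modz (modzDr 1 q)) coprime1z.
under eq_bigr => i _ do rewrite exprMn exprVn -(dcharX (en_dchar i)).
rewrite -mulr_suml (sum_dchar_neq1 Q_gt1 en_enum) ?mul0r ?coprimezXl //.
apply: gen_pow_neq1; rewrite ltn_ord andbT lt0n.
by apply: contra j_neq0 => /eqP j0; apply/eqP/val_inj.
Qed.

Lemma exists_dchar_gen : exists chi : int -> C,
  dirichlet_char Q chi /\ chi (1 + q%:Z) = e (q%:R^-1).
Proof.
have [k [en en_enum]] := dchar_enumerable R Q_gt0.
have en_dchar i : dirichlet_char Q (en i) by apply/en_enum.2; exists i.
have zq : e (q%:R^-1 : R) ^+ q = 1.
  by rewrite -e_mulrn -[_ *+ q]mulr_natr mulVf ?e1 // pnatr_eq0 -lt0n.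
have gq : ((1 + q%:Z) ^+ q = 1 %[mod Q])%Z.
  by rewrite gen_pow; apply/eqz_mod_addM; exists 1; rewrite QE; ring.
have [i /eqP en_i] : exists i, en i (1 + q%:Z) / e (q%:R^-1) == 1.
  apply/existsP; apply: contraT => /existsPn u_neq1; have := sum_dchar_gen_geom en_enum.
  rewrite big1 => [/esym/eqP | i _]; last first.
    rewrite sum_expr_unity_root ?(negbTE (u_neq1 i)) // exprMn exprVn zq invr1 mulr1.
    by rewrite -(dcharX (en_dchar i)) (dchar_modz (en_dchar i) gq) (dchar1 (en_dchar i)).
  by rewrite pnatr_eq0 (card_dchar Q_gt1 en_enum) eqn0Ngt totient_gt0 Q_gt0.
by exists (en i); split=> //; rewrite -[LHS](divfK (e_neq0 (q%:R^-1 : R))) en_i mul1r.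
Qed.

Lemma G1_of_gen (chi : int -> C) : dirichlet_char Q chi ->
  chi (1 + q%:Z) = e (q%:R^-1) -> G1 q chi.
Proof.
move=> chi_dchar chi_g; split=> // x /eqz_mod_addM [t xE].
have [_ tr] := modz_ord t q_gt0; set t0 := `|_|%N in tr.
have [s tE] := (eqz_mod_addM _ _ _).1 tr.
have xg : (x = (1 + q%:Z) ^+ t0 %[mod Q])%Z.
  by rewrite gen_pow; apply/eqz_mod_addM; exists s; rewrite xE tE QE; ring.
rewrite (dchar_modz chi_dchar xg) (dcharX chi_dchar) chi_g -e_mulrn.
rewrite (@e_modz _ Q _ (t0%:Z * q)) //; last first.
  by apply/eqz_mod_addM; exists s; rewrite xE tE QE; ring.
have qR : q%:R != 0 :> R by rewrite pnatr_eq0 -lt0n.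
by congr e; rewrite intrM natrX -!pmulrn; field.
Qed.

Lemma G1_exists : exists xi0 : int -> C, G1 q xi0.
Proof. by have [chi [chi_dchar chi_g]] := exists_dchar_gen; exists chi; apply: G1_of_gen. Qed.

Lemma G1_inv_mul (xi : int -> C) n ns nb n' : G1 q xi ->
  (n * ns = 1 %[mod Q])%Z -> (n * nb = 1 %[mod q])%Z -> (n = n' %[mod q])%Z ->
  xi (ns * n') = e (nb%:~R / q%:R * ((n' - n)%:~R / q%:R)).
Proof.
move=> [_ xiE] nns nnb nn'.
have [s nsE] := (eqz_mod_addM _ _ _).1 nns.
have [t n'E] := (eqz_mod_addM _ _ _).1 (esym nn').
have [u nbE] : exists u : int, ns = nb + u * q.
  by apply/eqz_mod_addM/(eqz_mod_mul2l nnb); rewrite (modz_sqr nns) nnb.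
have ns_n'E : ns * n' = 1 + nb * t * q + (s + u * t) * Q.
  have -> : ns * n' = n * ns + ns * t * q by rewrite n'E; ring.
  by rewrite nsE nbE QE; ring.
rewrite xiE; last first.
  by apply/eqz_mod_addM; exists (nb * t + (s + u * t) * q); rewrite ns_n'E QE; ring.
rewrite (@e_modz _ Q _ (nb * t * q)) //; last first.
  by apply/eqz_mod_addM; exists (s + u * t); rewrite ns_n'E; ring.
have qR : q%:R != 0 :> R by rewrite pnatr_eq0 -lt0n.
by rewrite n'E addrAC subrr add0r; congr e; rewrite !intrM natrX -!pmulrn; field.
Qed.

Section G1Orthogonality.
Variable xi0 : int -> C.
Hypothesis xi0_G1 : G1 q xi0.
Variable k : nat.
Variable en : 'I_k -> int -> C.
Hypothesis en_enum : enumerates (G1 q) en.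

Let chi_enum := enumerates_dchar xi0_G1 en_enum.
Let en_G1 i : G1 q (en i). Proof. by apply/en_enum.2; exists i. Qed.

Lemma card_G1 : k = totient q.
Proof. exact: (card_dchar q_gt1 chi_enum). Qed.

Lemma sum_G1_conjM n n' nb : (coprimez n q -> (n * nb = 1 %[mod q])%Z) ->
  \sum_i (en i n)^*%C * en i n' =
  if coprimez (n * n') q && (n == n' %[mod q])%Z
  then k%:R * e (nb%:~R / q%:R * ((n' - n)%:~R / q%:R)) else 0.
Proof.
move=> nbP; rewrite coprimezMl.
have [cnq | ncnq] /= := boolP (coprimez n q); last first.
  by apply: big1 => i _; rewrite (dchar0 (en_G1 i).1) ?coprimez_sqr // conjc0 mul0r.
have [cn'q | ncn'q] /= := boolP (coprimez n' q); last first.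
  by apply: big1 => i _; rewrite [en i n'](dchar0 (en_G1 i).1) ?coprimez_sqr // mulr0.
have cnQ : coprimez n Q by rewrite coprimez_sqr.
have [ns nns] := coprimez_invmod cnQ; have nns_q := modz_sqr nns.
have cnsq : coprimez ns q.
  by move: (coprime1z q); rewrite -(coprimez_modz nns_q) coprimezMl => /andP [].
under eq_bigr => i _ do
  rewrite (dchar_conjM (en_G1 i).1 Q_gt0 n' cnQ nns) {1}(G1_divK xi0_G1 (en_G1 i)) /=.
rewrite -mulr_sumr -(eqz_mod_inv_mul n' nns_q).
have [nsn'1 | nsn'_neq1] := boolP (ns * n' == 1 %[mod q])%Z; last first.
  by rewrite (sum_dchar_neq1 q_gt1 chi_enum) ?mulr0 // coprimezMl cnsq.
rewrite (sum_dchar_eq1 chi_enum (eqP nsn'1)) mulrC; congr (_ * _).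
by apply: G1_inv_mul xi0_G1 nns (nbP cnq) _; apply/eqP; rewrite -(eqz_mod_inv_mul _ nns_q).
Qed.

End G1Orthogonality.

End G1Theory.

Lemma sum_sqr_norm_sum (R : rcfType) k N (b : 'I_N -> R[i]) (X : 'I_k -> 'I_N -> R[i]) :
  \sum_i `|\sum_j b j * X i j| ^+ 2 =
  \sum_j \sum_j' (b j)^*%C * b j' * \sum_i (X i j)^*%C * X i j'.
Proof.
under eq_bigr => i _ do rewrite sqr_normc mulrC rmorph_sum mulr_suml.
rewrite exchange_big /=; apply: eq_bigr => j _.
under eq_bigr => i _ do rewrite mulr_sumr.
rewrite exchange_big /=; apply: eq_bigr => j' _.
rewrite mulr_sumr; apply: eq_bigr => i _.
by rewrite rmorphM /=; ring.
Qed.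

Unset Implicit Arguments.

Theorem mainTheorem1 (R : realType) (q : nat) (M : int) (N : nat)
    (a : int -> R[i]) (nbar : int -> int) :
  (2 <= q)%N ->
  (forall n : int, coprimez n q%:Z -> (n * nbar n = 1 %[mod q%:Z])%Z) ->
  (exists (k : nat) (en : 'I_k -> int -> R[i]),
      injective en /\ forall xi, G1 q xi <-> exists i, xi = en i)
  /\
  (forall (k : nat) (en : 'I_k -> int -> R[i]),
      injective en -> (forall xi, G1 q xi <-> exists i, xi = en i) ->
      k = totient q /\
      (q%:R / (totient q)%:R) *
        \sum_(i < k) `| \sum_(j < N) a (M + (j.+1)%:Z) * en i (M + (j.+1)%:Z) | ^+ 2
      = q%:R *
        \sum_(j < N) \sum_(j' < N |
            let n := M + (j.+1)%:Z in let n' := M + (j'.+1)%:Z in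
            coprimez (n * n') q%:Z && (n == n' %[mod q%:Z])%Z)
          (let n := M + (j.+1)%:Z in let n' := M + (j'.+1)%:Z in
           conjc (a n) * a n' *
             e ((nbar n)%:~R / q%:R * ((n' - n)%:~R / q%:R))))
  /\
  (forall xi0 : int -> R[i], G1 q xi0 ->
     forall xi : int -> R[i],
       G1 q xi <-> exists chi : int -> R[i],
                     dirichlet_char q chi /\ xi = (fun x => xi0 x * chi x)).
Proof.
move=> q_gt1 nbarP; have [xi0 xi0_G1] := G1_exists R q_gt1.
split.
  have [k [en en_enum]] := dchar_enumerable R (ltnW q_gt1).
  by exists k, (fun i x => xi0 x * en i x); apply: enumerates_G1.
split=> [k en en_inj en_all | xi1 xi1_G1 xi]; last exact: G1_cosetE.
have en_enum : enumerates (G1 q) en by [].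
have k_tot := card_G1 q_gt1 xi0_G1 en_enum.
split=> //; rewrite -k_tot sum_sqr_norm_sum !mulr_sumr; apply: eq_bigr => j _.
rewrite [in RHS]big_mkcond !mulr_sumr; apply: eq_bigr => j' _ /=.
rewrite (sum_G1_conjM q_gt1 xi0_G1 en_enum _ (nbarP _)).
case: ifP => _; last by rewrite !mulr0.
have k_neq0 : k%:R != 0 :> R[i] by rewrite k_tot pnatr_eq0 -lt0n totient_gt0 ltnW.
by field.
Qed.
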